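(* Let $(X,\tau)$ be a Hausdorff extended locally convex space having a countable neighborhood base at $0_X$, and let $\tau_F$ be its finest locally convex topology. Then the following are equivalent: (a) $(X,\tau_F)$ is metrizable; (b) for every $\tau$-continuous extended seminorm $\rho$ on $X$, the quotient space $X/X^{\rho}_{fin}$ is finite dimensional, where $X^\rho_{fin}=\{x\in X:\rho(x)<\infty\}$.
   Context: An extended seminorm on a vector space $X$ over $\mathbb{R}$ or $\mathbb{C}$ is a map $\rho:X\to[0,\infty]$ with $\rho(\alpha x)=|\alpha|\rho(x)$ and $\rho(x+y)\le\rho(x)+\rho(y)$. An extended locally convex space $(X,\tau)$ is a vector space with the topology induced by a family $\{\rho_i\}$ of extended seminorms (neighborhood base at $x_0$: $\{x:\max_{i\in J}\rho_i(x-x_0)<\varepsilon\}$, $J$ finite, $\varepsilon>0$). A locally convex topology is one induced in this way by finite-valued seminorms. The finest locally convex topology of $(X,\tau)$ is the locally convex topology $\tau_F\subseteq\tau$ such that every locally convex topology $\sigma\subseteq\tau$ on $X$ satisfies $\sigma\subseteq\tau_F$. *)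

(* Scalars: a numFieldType K together with its
   absolute value nK : K -> R (R : realType); the statement instantiates
   (K, nK) to (R, |.|) and to (R[i], complex modulus). *)
From mathcomp Require Import all_boot all_order all_algebra.
From mathcomp Require Import all_classical all_reals all_analysis.
From mathcomp Require Import complex.
Set Implicit Arguments. Unset Strict Implicit. Unset Printing Implicit Defensive.
Import Order.TTheory GRing.Theory Num.Theory.
Local Open Scope classical_set_scope.
Local Open Scope ring_scope.

Definition cmod (R : realType) (z : R[i]) : R := ComplexField.Normc.normc z.

Definition ext_seminorm (R : realType) (K : numFieldType) (nK : K -> R)
    (X : lmodType K) (rho : X -> \bar R) : Prop :=
  (forall x, (0 <= rho x)%E) /\
  (forall (a : K) (x : X), rho (a *: x) = ((nK a)%:E * rho x)%E) /\
  (forall x y : X, (rho (x + y)%R <= rho x + rho y)%E).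

Definition seminorm (R : realType) (K : numFieldType) (nK : K -> R)
    (X : lmodType K) (q : X -> R) : Prop :=
  (forall (a : K) (x : X), q (a *: x) = nK a * q x) /\
  (forall x y : X, q (x + y) <= q x + q y).

(* topologies are represented by their families of open sets *)
Definition induced_topology (R : realType) (K : numFieldType) (X : lmodType K)
    (I : Type) (p : I -> X -> \bar R) : set (set X) :=
  [set U | forall x0, U x0 ->
     exists J : set I, finite_set J /\
     exists eps : R, 0 < eps /\
       [set x | forall i, J i -> (p i (x - x0)%R < eps%:E)%E] `<=` U].

Definition locally_convex_topology (R : realType) (K : numFieldType)
    (nK : K -> R) (X : lmodType K) (sigma : set (set X)) : Prop :=
  exists (I : Type) (q : I -> X -> R),
    (forall i, seminorm nK (q i)) /\
    sigma = induced_topology (fun i x => (q i x)%:E).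

Definition finest_lc_topology (R : realType) (K : numFieldType) (nK : K -> R)
    (X : lmodType K) (tau tauF : set (set X)) : Prop :=
  locally_convex_topology nK tauF /\ tauF `<=` tau /\
  (forall sigma, locally_convex_topology nK sigma -> sigma `<=` tau ->
     sigma `<=` tauF).

Definition is_nbhd (T : Type) (tau : set (set T)) (x : T) (N : set T) : Prop :=
  exists U, tau U /\ U x /\ U `<=` N.

Definition hausdorff_top (T : Type) (tau : set (set T)) : Prop :=
  forall x y : T, x <> y -> exists U V, tau U /\ tau V /\ U x /\ V y /\
    U `&` V = set0.

Definition countable_nbhd_base (T : Type) (tau : set (set T)) (x : T) : Prop :=
  exists B : nat -> set T, (forall n, is_nbhd tau x (B n)) /\
    (forall N, is_nbhd tau x N -> exists n, B n `<=` N).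

Definition is_metric (R : realType) (T : Type) (d : T -> T -> R) : Prop :=
  (forall x y, 0 <= d x y) /\ (forall x y, d x y = 0 <-> x = y) /\
  (forall x y, d x y = d y x) /\ (forall x y z, d x z <= d x y + d y z).

Definition metric_topology (R : realType) (T : Type) (d : T -> T -> R)
    : set (set T) :=
  [set U | forall x, U x -> exists r : R, 0 < r /\ [set y | d x y < r] `<=` U].

Definition metrizable_top (R : realType) (T : Type) (tau : set (set T)) : Prop :=
  exists d : T -> T -> R, is_metric d /\ metric_topology d = tau.

(* rho : (X, tau) -> [0, +oo] is continuous ([0,+oo] with its usual topology
   as a subspace of the extended reals) *)
Definition continuous_ext (R : realType) (T : Type) (tau : set (set T))
    (rho : T -> \bar R) : Prop :=
  forall x0 (V : set (\bar R)), nbhs (rho x0) V -> is_nbhd tau x0 (rho @^-1` V).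

(* X / X^rho_fin is finite dimensional: finitely many vectors whose classes
   span the quotient, X^rho_fin = {x | rho x < +oo} *)
Definition X_fin (R : realType) (K : numFieldType) (X : lmodType K)
    (rho : X -> \bar R) : set X := [set x | (rho x < +oo)%E].

Definition finite_dim_quotient (R : realType) (K : numFieldType)
    (X : lmodType K) (rho : X -> \bar R) : Prop :=
  exists (n : nat) (v : 'I_n -> X), forall x : X,
    exists c : 'I_n -> K, X_fin rho (x - \sum_(i < n) c i *: v i).

(* (b) => (a): choose a countable base of tau-neighbourhoods of 0 and, for each of
   them, a tau-continuous extended seminorm rho_n whose unit ball lies inside it.  As
   X / X^rho_n_fin is finite dimensional, rho_n on the X^rho_n_fin-component plus the
   l^1-norm of the coordinates modulo X^rho_n_fin is a finite seminorm q_n <= rho_n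
   dominating every seminorm below rho_n.  So every tau_F-continuous seminorm is
   dominated by a partial sum Q_N of the q_n: tau_F is generated by the increasing
   sequence (Q_N), which separates points because tau is Hausdorff, and such a topology
   is metrized by d(x, y) = sup_N min(1/(N+1), Q_N(x - y)).
   (a) => (b): if X / X^rho_fin is infinite dimensional for a continuous rho, pick y_n
   in the 1/(n+1)-ball of a metric for tau_F with y_n outside
   span(y_0, ..., y_(n-1)) + X^rho_fin, and (Zorn) a linear functional f vanishing on
   X^rho_fin with f(y_n) = 1.  Since X^rho_fin is a tau-neighbourhood of 0, |f| is
   tau-continuous, hence tau_F-continuous, which contradicts y_n -> 0. *)

From mathcomp Require Import all_boot all_order all_algebra.
From mathcomp Require Import all_classical all_reals all_analysis.
From mathcomp Require Import complex finmap lra ring.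
Import Order.TTheory GRing.Theory Num.Theory.
Local Open Scope classical_set_scope.
Local Open Scope ring_scope.
Set Implicit Arguments. Unset Strict Implicit. Unset Printing Implicit Defensive.

Lemma finite_set_ubound d (T : orderType d) (x0 : T) (I : Type) (J : set I)
    (f : I -> T) :
  finite_set J -> exists M, forall j, J j -> (f j <= M)%O.
Proof.
move=> /(finite_image f)/finite_fsetP[Y HY].
exists (\big[Order.max/x0]_(y <- enum_fset Y) y) => j Jj.
have fjY : [set` Y] (f j) by rewrite -HY; exists j.
exact: (le_bigmax_seq x0 (f j) xpredT id fjY).
Qed.

Lemma hausdorff_base_separating (T : Type) (tau : set (set T)) (x0 : T)
    (B : nat -> set T) :
  hausdorff_top tau -> (forall N, is_nbhd tau x0 N -> exists n, B n `<=` N) ->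
  forall x, x <> x0 -> exists n, ~ B n x.
Proof.
move=> hsep base x /hsep[U [V [oU [oV [Ux [Vx0 UV0]]]]]].
have [n BV] : exists n, B n `<=` V by apply: base; exists V; do 2 split=> //.
by exists n => /BV Vx; have : (U `&` V) x by []; rewrite UV0.
Qed.

Lemma metric_ball_open (R : realType) (T : Type) (d : T -> T -> R) x r :
  is_metric d -> metric_topology d [set z | d x z < r].
Proof.
move=> [_ [_ [_ d_tri]]] z /= dxz; exists (r - d x z); split; first by rewrite subr_gt0.
by move=> w /= dzw; have := d_tri x z w; lra.
Qed.

Lemma prefix_choice (T : Type) (x0 : T) (P : forall n, ('I_n -> T) -> T -> Prop) :
  (forall n (f : 'I_n -> T), exists z, P n f z) ->
  exists y : nat -> T, forall n, P n (fun i => y i) (y n).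
Proof.
move=> hP; have /choice[next nextP] : forall nf : {n & 'I_n -> T},
    exists z, P (projT1 nf) (projT2 nf) z by case=> n f; exact: hP.
(* [ys n] holds the first [n] terms, and [x0] beyond. *)
pose fix ys n := if n is n'.+1 then fun k =>
    if k == n' then next (existT _ n' (fun i : 'I_n' => ys n' i)) else ys n' k
  else fun=> x0.
have ysE n k : (k < n)%N -> ys n k = ys k.+1 k.
  elim: n => // n IH; rewrite ltnS leq_eqVlt => /predU1P[->|kn] /=.
    by rewrite eqxx.
  by rewrite ifN ?IH // neq_ltn kn.
exists (fun n => ys n.+1 n) => n; have := nextP (existT _ n (fun i : 'I_n => ys n i)).
by rewrite /= eqxx; congr P; apply/funext => i; exact: ysE.
Qed.

Definition pad (V : nmodType) N (F : nat -> V) k := if (k < N)%N then F k else 0.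

Lemma big_ord_pad (V : nmodType) N M (F : nat -> V) :
  (N <= M)%N -> \sum_(k < M) pad N F k = \sum_(k < N) F k.
Proof. by move=> NM; rewrite (big_ord_widen M F NM) [RHS]big_mkcond. Qed.

(** * Extension of linear functionals *)

Section LinearExtension.
Variables (K : fieldType) (X : lmodType K).

Record linear_on (D : set X) (g : X -> K) : Prop := LinearOn {
  linear_on0 : D 0;
  linear_onD : forall x y, D x -> D y -> D (x + y);
  linear_onZ : forall a x, D x -> D (a *: x);
  linear_on_add : forall x y, D x -> D y -> g (x + y) = g x + g y;
  linear_on_scale : forall a x, D x -> g (a *: x) = a * g x }.

Definition extends (D : set X) (g : X -> K) (D' : set X) (g' : X -> K) :=
  D `<=` D' /\ forall x, D x -> g' x = g x.

Lemma extends_refl D g : extends D g D g.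
Proof. by split. Qed.

Lemma extends_trans D g D' g' D'' g'' :
  extends D g D' g' -> extends D' g' D'' g'' -> extends D g D'' g''.
Proof.
move=> [DD' g'E] [D'D'' g''E]; split; first exact: subset_trans D'D''.
by move=> x Dx; rewrite g''E ?g'E //; exact: DD'.
Qed.

Lemma linear_onB D g x y : linear_on D g -> D x -> D y -> D (x - y).
Proof.
move=> lin Dx Dy; apply: (linear_onD lin) => //.
by rewrite -scaleN1r; exact: (linear_onZ lin).
Qed.

Lemma linear_on_line D g x : linear_on D g -> ~ D x ->
  exists D' g', [/\ linear_on D' g', extends D g D' g' & D' x].
Proof.
move=> lin Dx; pose D' z := exists d a, D d /\ z = d + a *: x.
have D'_uniq d a d' a' : D d -> D d' -> d + a *: x = d' + a' *: x -> d = d'.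
  move=> Dd Dd' e; suff aa' : a = a' by move: e; rewrite aa' => /addIr.
  apply: contrapT => /eqP; rewrite -subr_eq0 => aa'; apply: Dx.
  have dd : (a - a') *: x = d' - d.
    by rewrite scalerBl; apply/eqP; rewrite subr_eq addrAC -e addrC addKr.
  have -> : x = (a - a')^-1 *: (d' - d) by rewrite -dd scalerA mulVf ?scale1r.
  by apply: (linear_onZ lin); exact: (linear_onB lin).
pose g' z := if pselect (D' z) is left h then g (projT1 (cid h)) else 0.
have g'E d a : D d -> g' (d + a *: x) = g d.
  move=> Dd; rewrite /g'; case: pselect => [h|[]]; last by exists d, a.
  by case: (cid h) => d' [a' [Dd' e]] /=; rewrite (D'_uniq _ _ _ _ Dd Dd' e).
have D'D z : D z -> D' z by move=> Dz; exists z, 0; rewrite scale0r addr0.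
have g'D z : D z -> g' z = g z by move=> Dz; have := g'E z 0 Dz; rewrite scale0r addr0.
exists D', g'; split; [split|by split|].
- exact/D'D/(linear_on0 lin).
- move=> _ _ [d [a [Dd ->]]] [d' [a' [Dd' ->]]]; exists (d + d'), (a + a').
  by rewrite scalerDl addrACA; split=> //; exact: (linear_onD lin).
- move=> b _ [d [a [Dd ->]]]; exists (b *: d), (b * a).
  by rewrite scalerDr scalerA; split=> //; exact: (linear_onZ lin).
- move=> _ _ [d [a [Dd ->]]] [d' [a' [Dd' ->]]].
  rewrite addrACA -scalerDl !g'E //; first exact: (linear_on_add lin).
  exact: (linear_onD lin).
- move=> b _ [d [a [Dd ->]]].
  rewrite scalerDr scalerA !g'E //; first exact: (linear_on_scale lin).
  exact: (linear_onZ lin).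
by exists 0, 1; rewrite scale1r add0r; split=> //; exact: (linear_on0 lin).
Qed.

Lemma linear_on_chain (A : set (set X * (X -> K))) :
  A !=set0 -> (forall s, A s -> linear_on s.1 s.2) ->
  total_on A (fun s t => extends s.1 s.2 t.1 t.2) ->
  exists t, linear_on t.1 t.2 /\ forall s, A s -> extends s.1 s.2 t.1 t.2.
Proof.
move=> [s0 As0] Alin Atot; pose D x := exists2 s, A s & s.1 x.
pose g x := if pselect (D x) is left h then (projT1 (cid2 h)).2 x else 0.
have gE s x : A s -> s.1 x -> g x = s.2 x.
  move=> As sx; rewrite /g; case: pselect => [h|[]]; last by exists s.
  case: (cid2 h) => s' As' s'x /=.
  by have [[_ ->]|[_ ->]] := Atot s s' As As'.
have up s s' : A s -> A s' -> exists2 u, A u & s.1 `<=` u.1 /\ s'.1 `<=` u.1.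
  move=> As As'; have [[ss' _]|[s's _]] := Atot s s' As As'.
    by exists s' => //; split; [exact: ss'|exact: subset_refl].
  by exists s => //; split; [exact: subset_refl|exact: s's].
exists (D, g); split=> [|s As]; last by split=> [x sx|x sx]; [exists s|exact: gE].
split.
- by exists s0 => //; exact: (linear_on0 (Alin _ As0)).
- move=> x y [s As sx] [s' As' s'y]; have [u Au [su s'u]] := up s s' As As'.
  by exists u => //; apply: (linear_onD (Alin _ Au)); [exact: su|exact: s'u].
- by move=> a x [s As sx]; exists s => //; exact: (linear_onZ (Alin _ As)).
- move=> x y [s As sx] [s' As' s'y].
  have [u Au [/(_ _ sx) ux /(_ _ s'y) uy]] := up s s' As As'.
  rewrite /= !(gE u) //; first exact: (linear_on_add (Alin _ Au)).
  exact: (linear_onD (Alin _ Au)).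
- move=> a x [s As sx]; rewrite /= !(gE s) //.
    exact: (linear_on_scale (Alin _ As)).
  exact: (linear_onZ (Alin _ As)).
Qed.

Lemma linear_extension W g0 : linear_on W g0 ->
  exists f : X -> K, [/\ forall x y, f (x + y) = f x + f y,
    forall a x, f (a *: x) = a * f x & forall x, W x -> f x = g0 x].
Proof.
move=> Wlin.
pose T := {s : set X * (X -> K) | linear_on s.1 s.2 /\ extends W g0 s.1 s.2}.
pose t0 : T := exist _ (W, g0) (conj Wlin (extends_refl W g0)).
pose ext (s t : T) := `[< extends (sval s).1 (sval s).2 (sval t).1 (sval t).2 >].
have extP s t : reflect (extends (sval s).1 (sval s).2 (sval t).1 (sval t).2) (ext s t).
  exact: asboolP.
have [| | |t tmax] := @ZL_preorder T t0 ext.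
- by move=> s; apply/extP; exact: extends_refl.
- by move=> r s t /extP rs /extP st; apply/extP; exact: extends_trans rs st.
- move=> A Atot; have [[s0 As0]|A0] := pselect (A !=set0); last first.
    by exists t0 => s As; case: A0; exists s.
  have [] := @linear_on_chain [set sval s | s in A].
  + by exists (sval s0), s0.
  + by move=> _ [s _ <-]; case: (svalP s).
  + move=> _ _ [s As <-] [s' As' <-].
    by have [/extP|/extP] := Atot s s' As As'; [left|right].
  move=> u [ulin uA]; have [_ W0ext] := svalP s0.
  have uext : extends W g0 u.1 u.2 by apply: extends_trans W0ext (uA _ _); exists s0.
  by exists (exist _ u (conj ulin uext)) => s As; apply/extP; apply: uA; exists s.
have [tlin _] := svalP t.
have Dt x : (sval t).1 x.
  apply: contrapT => tx; have [D' [g' [lin' ext' D'x]]] := linear_on_line tlin tx.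
  have [_ Wext] := svalP t.
  pose s : T := exist _ (D', g') (conj lin' (extends_trans Wext ext')).
  have /tmax/extP[D't _] : ext t s by exact/extP.
  exact/tx/D't.
exists (sval t).2; split=> [x y|a x|x Wx].
- exact: (linear_on_add tlin (Dt x) (Dt y)).
- exact: (linear_on_scale tlin _ (Dt x)).
- by have [_ [_ ->]] := svalP t.
Qed.

End LinearExtension.

Section AbsoluteValue.
Variables (R : realType) (K : numFieldType) (nK : K -> R).
Hypothesis nK0 : nK 0 = 0.
Hypothesis nK_ge0 : forall a, 0 <= nK a.
Hypothesis nK_eq0 : forall a, nK a = 0 -> a = 0.
Hypothesis nKM : forall a b, nK (a * b) = nK a * nK b.
Hypothesis nKD : forall a b, nK (a + b) <= nK a + nK b.
Hypothesis nK1 : nK 1 = 1.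
Hypothesis nKN1 : nK (-1) = 1.
Hypothesis nK_surj : forall r : R, 0 < r -> exists a, nK a = r.
Variable X : lmodType K.

Section ExtSeminorm.
Variable rho : X -> \bar R.
Hypothesis rho_es : ext_seminorm nK rho.

Lemma ext_seminorm_ge0 x : (0 <= rho x)%E. Proof. by case: rho_es. Qed.

Lemma ext_seminormZ a x : rho (a *: x) = ((nK a)%:E * rho x)%E.
Proof. by case: rho_es => _ []. Qed.

Lemma ext_seminormD x y : (rho (x + y) <= rho x + rho y)%E.
Proof. by case: rho_es => _ []. Qed.

Lemma ext_seminorm0 : rho 0 = 0%E.
Proof. by rewrite -(scale0r (0 : X)) ext_seminormZ nK0 mul0e. Qed.

Lemma ext_seminormN x : rho (- x) = rho x.
Proof. by rewrite -scaleN1r ext_seminormZ nKN1 mul1e. Qed.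

Lemma ext_seminormB x y : rho (x - y) = rho (y - x).
Proof. by rewrite -ext_seminormN opprB. Qed.

Lemma ext_seminorm_distD x y z : (rho (x - z) <= rho (x - y) + rho (y - z))%E.
Proof. by have := ext_seminormD (x - y) (y - z); rewrite addrA subrK. Qed.

Lemma X_fin0 : X_fin rho 0.
Proof. by rewrite /X_fin /= ext_seminorm0. Qed.

Lemma X_finD x y : X_fin rho x -> X_fin rho y -> X_fin rho (x + y).
Proof.
by move=> hx hy; apply: le_lt_trans (ext_seminormD x y) _; exact: lte_add_pinfty.
Qed.

Lemma X_finZ a x : X_fin rho x -> X_fin rho (a *: x).
Proof.
rewrite /X_fin /= ext_seminormZ => hx.
have rx : rho x \is a fin_num by rewrite ge0_fin_numE // ext_seminorm_ge0.
by rewrite -(fineK rx) -EFinM ltry.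
Qed.

Lemma X_finN x : X_fin rho x -> X_fin rho (- x).
Proof. by rewrite /X_fin /= ext_seminormN. Qed.

Lemma X_finB x y : X_fin rho x -> X_fin rho y -> X_fin rho (x - y).
Proof. by move=> hx hy; apply: X_finD => //; exact: X_finN. Qed.

Lemma X_fin_lt x r : (rho x < r%:E)%E -> X_fin rho x.
Proof. by move=> /lt_trans; apply; exact: ltry. Qed.

Lemma X_finE x : X_fin rho x -> rho x = (fine (rho x))%:E.
Proof. by move=> hx; rewrite fineK // ge0_fin_numE // ext_seminorm_ge0. Qed.

Lemma X_finNE x : ~ X_fin rho x -> rho x = +oo%E.
Proof. by move=> /negP; rewrite /X_fin /= -leNgt leye_eq => /eqP. Qed.

Lemma X_fin_subr x y : X_fin rho (x - y) -> X_fin rho x -> X_fin rho y.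
Proof. by move=> hxy hx; rewrite -(subKr x y); exact: X_finB. Qed.

Lemma ext_seminorm_dist x y : X_fin rho x -> X_fin rho y ->
  `|fine (rho x) - fine (rho y)| <= fine (rho (x - y)).
Proof.
move=> hx hy; have hxy := X_finB hx hy; have hyx := X_finB hy hx.
have := ext_seminormD (x - y) y; have := ext_seminormD (y - x) x.
rewrite !subrK (ext_seminormB y x) (X_finE hx) (X_finE hy) (X_finE hxy).
by rewrite -!EFinD !lee_fin ler_norml => h1 h2; apply/andP; split; lra.
Qed.

End ExtSeminorm.

Section Seminorm.
Variable q : X -> R.
Hypothesis q_sn : seminorm nK q.

Lemma seminormZ a x : q (a *: x) = nK a * q x. Proof. by case: q_sn. Qed.

Lemma seminormD x y : q (x + y) <= q x + q y. Proof. by case: q_sn. Qed.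

Lemma seminorm0 : q 0 = 0.
Proof. by rewrite -(scale0r (0 : X)) seminormZ nK0 mul0r. Qed.

Lemma seminormN x : q (- x) = q x.
Proof. by rewrite -scaleN1r seminormZ nKN1 mul1r. Qed.

Lemma seminormB x y : q (x - y) = q (y - x).
Proof. by rewrite -seminormN opprB. Qed.

Lemma seminorm_ge0 x : 0 <= q x.
Proof. by have := seminormD x (- x); rewrite subrr seminorm0 seminormN; lra. Qed.

Lemma seminorm_sum n (f : 'I_n -> X) : q (\sum_(i < n) f i) <= \sum_(i < n) q (f i).
Proof.
elim/big_ind2: _ => [|x1 x2 y1 y2 h1 h2|//]; first by rewrite seminorm0.
by apply: le_trans (seminormD _ _) _; exact: lerD.
Qed.

Lemma seminorm_ext_seminorm : ext_seminorm nK (fun x => (q x)%:E).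
Proof.
split=> [x|]; first by rewrite lee_fin seminorm_ge0.
by split=> [a x|x y]; rewrite ?seminormZ ?EFinM // -EFinD lee_fin seminormD.
Qed.

End Seminorm.

Definition partial_sum (q : nat -> X -> R) N x := \sum_(n < N.+1) q n x.

Section PartialSum.
Variable q : nat -> X -> R.
Hypothesis q_sn : forall n, seminorm nK (q n).

Lemma partial_sum_seminorm N : seminorm nK (partial_sum q N).
Proof.
split=> [a x|x y]; rewrite /partial_sum.
  by rewrite mulr_sumr; apply: eq_bigr => n _; rewrite seminormZ.
by rewrite -big_split; apply: ler_sum => n _; exact: seminormD.
Qed.

Lemma partial_sum_mono n N x : (n <= N)%N -> partial_sum q n x <= partial_sum q N x.
Proof.
move=> nN; rewrite /partial_sum (big_ord_widen N.+1 (q^~ x) (nN : n < N.+1)%N).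
rewrite big_mkcond /=.
by apply: ler_sum => i _; case: ifP => // _; exact: seminorm_ge0.
Qed.

Lemma le_partial_sum n x : q n x <= partial_sum q n x.
Proof.
rewrite /partial_sum big_ord_recr lerDr; apply: sumr_ge0 => i _.
exact: seminorm_ge0.
Qed.

End PartialSum.

(** * Extended seminorms with a finite-dimensional quotient *)

Section FiniteCodimension.
Variable rho : X -> \bar R.
Hypothesis rho_es : ext_seminorm nK rho.

Definition span_modulo n (v : 'I_n -> X) :=
  forall x, exists c : 'I_n -> K, X_fin rho (x - \sum_(i < n) c i *: v i).

Definition free_modulo n (v : 'I_n -> X) :=
  forall c : 'I_n -> K, X_fin rho (\sum_(i < n) c i *: v i) -> forall i, c i = 0.

Lemma span_modulo_lift n (v : 'I_n.+1 -> X) (c : 'I_n.+1 -> K) j :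
  span_modulo v -> X_fin rho (\sum_(i < n.+1) c i *: v i) -> c j != 0 ->
  span_modulo (fun i => v (lift j i)).
Proof.
move=> vspan fc cj0 x; have [d fd] := vspan x; pose t := d j / c j.
exists (fun i => d (lift j i) - t * c (lift j i)).
suff -> : x - \sum_(i < n) (d (lift j i) - t * c (lift j i)) *: v (lift j i) =
    (x - \sum_(i < n.+1) d i *: v i) + t *: \sum_(i < n.+1) c i *: v i.
  by apply: X_finD => //; exact: X_finZ.
rewrite (bigD1_ord j) //= (bigD1_ord j) //= scalerDr scalerA divfK //.
rewrite [_ *: v j + _]addrC opprD !addrA subrK -addrA; congr (_ + _).
rewrite scaler_sumr -!sumrN -big_split; apply: eq_bigr => i _.
by rewrite scalerBl opprB scalerA addrC.
Qed.

Lemma finite_dim_quotient_basis : finite_dim_quotient rho ->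
  exists m (v : 'I_m -> X), free_modulo v /\ span_modulo v.
Proof.
move=> [n [v vspan]]; elim: n v vspan => [|n IH] v vspan.
  by exists 0%N, v; split => // c _ [].
have [vfree|] := pselect (free_modulo v); first by exists n.+1, v.
move=> /existsNP[c /not_implyP[fc /existsNP[j /eqP cj0]]].
exact: IH (span_modulo_lift vspan fc cj0).
Qed.

Lemma outside_span_modulo_scale n (v : 'I_n -> X) x t : t != 0 ->
  (forall c : 'I_n -> K, ~ X_fin rho (x - \sum_(i < n) c i *: v i)) ->
  forall c : 'I_n -> K, ~ X_fin rho (t *: x - \sum_(i < n) c i *: v i).
Proof.
move=> t0 xout c fc; apply: (xout (fun i => t^-1 * c i)).
suff -> : x - \sum_(i < n) (t^-1 * c i) *: v i =
    t^-1 *: (t *: x - \sum_(i < n) c i *: v i) by exact: X_finZ.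
rewrite scalerBr scalerA mulVf // scale1r scaler_sumr.
by congr (_ - _); apply: eq_bigr => i _; rewrite scalerA.
Qed.

Section QuotientNorm.
Variables (m : nat) (v : 'I_m -> X).
Hypotheses (v_free : free_modulo v) (v_span : span_modulo v).

Let comb (c : 'I_m -> K) := \sum_(i < m) c i *: v i.

Let combD c d : comb (fun i => c i + d i) = comb c + comb d.
Proof. by rewrite /comb -big_split; apply: eq_bigr => i _; rewrite scalerDl. Qed.

Let combB c d : comb (fun i => c i - d i) = comb c - comb d.
Proof. by rewrite /comb -sumrB; apply: eq_bigr => i _; rewrite scalerBl. Qed.

Let combZ a c : comb (fun i => a * c i) = a *: comb c.
Proof. by rewrite /comb scaler_sumr; apply: eq_bigr => i _; rewrite scalerA. Qed.

Definition quot_coord x : 'I_m -> K := sval (cid (v_span x)).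

Definition quot_rem x := x - comb (quot_coord x).

Lemma X_fin_quot_rem x : X_fin rho (quot_rem x).
Proof. exact: (svalP (cid (v_span x))). Qed.

Lemma quot_coord_uniq x c : X_fin rho (x - comb c) -> quot_coord x = c.
Proof.
move=> fc; apply/funext => i; apply/eqP; rewrite -subr_eq0; apply/eqP; move: i.
apply: v_free; rewrite -/(comb _) combB.
suff -> : comb (quot_coord x) - comb c = (x - comb c) - quot_rem x.
  by apply: X_finB => //; exact: X_fin_quot_rem.
by rewrite /quot_rem opprB [RHS]addrC subrKA.
Qed.

Lemma quot_coordD x y :
  quot_coord (x + y) = (fun i => quot_coord x i + quot_coord y i).
Proof.
apply: quot_coord_uniq; rewrite combD opprD addrACA.
by apply: (X_finD rho_es); exact: X_fin_quot_rem.
Qed.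

Lemma quot_coordZ a x : quot_coord (a *: x) = (fun i => a * quot_coord x i).
Proof.
apply: quot_coord_uniq; rewrite combZ -scalerBr.
by apply: (X_finZ rho_es); exact: X_fin_quot_rem.
Qed.

Lemma quot_coord_fin x : X_fin rho x -> quot_coord x = (fun=> 0).
Proof.
move=> fx; apply: quot_coord_uniq.
by rewrite /comb big1 ?subr0 // => i _; rewrite scale0r.
Qed.

Lemma quot_remD x y : quot_rem (x + y) = quot_rem x + quot_rem y.
Proof. by rewrite /quot_rem quot_coordD combD opprD addrACA. Qed.

Lemma quot_remZ a x : quot_rem (a *: x) = a *: quot_rem x.
Proof. by rewrite /quot_rem quot_coordZ combZ scalerBr. Qed.

Lemma quot_rem_fin x : X_fin rho x -> quot_rem x = x.
Proof.
move=> fx; rewrite /quot_rem quot_coord_fin // /comb big1 ?subr0 // => i _.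
exact: scale0r.
Qed.

Definition quot_norm x :=
  fine (rho (quot_rem x)) + \sum_(i < m) nK (quot_coord x i).

Lemma quot_norm_seminorm : seminorm nK quot_norm.
Proof.
have frem := X_fin_quot_rem.
split=> [a x|x y]; rewrite /quot_norm.
  rewrite quot_remZ ext_seminormZ // (X_finE rho_es (frem x)) -EFinM /=.
  by rewrite mulrDr mulr_sumr quot_coordZ; congr (_ + _); apply: eq_bigr => i _.
rewrite addrACA; apply: lerD.
  have := ext_seminormD rho_es (quot_rem x) (quot_rem y); rewrite -quot_remD.
  by rewrite (X_finE rho_es (frem x)) (X_finE rho_es (frem y)) (X_finE rho_es (frem _)).
by rewrite -big_split quot_coordD; apply: ler_sum => i _.
Qed.

Lemma quot_norm_le x : ((quot_norm x)%:E <= rho x)%E.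
Proof.
have [fx|/X_finNE -> //] := pselect (X_fin rho x); last exact: leey.
rewrite /quot_norm quot_rem_fin // quot_coord_fin // big1 ?addr0 //.
by rewrite -X_finE.
Qed.

Lemma quot_norm_eq0 x : quot_norm x = 0 -> rho x = 0%E.
Proof.
have hr := fine_ge0 (ext_seminorm_ge0 rho_es (quot_rem x)).
rewrite /quot_norm => /eqP; rewrite paddr_eq0 ?sumr_ge0 // psumr_eq0 //.
move=> /andP[/eqP r0 /allP c0].
have cx : quot_coord x = (fun=> 0).
  by apply/funext => i; apply/nK_eq0/eqP; exact: implyP (c0 i (mem_index_enum i)) isT.
have fx : X_fin rho x.
  have := X_fin_quot_rem x; rewrite /quot_rem cx /comb big1 ?subr0 // => i _.
  exact: scale0r.
by rewrite (X_finE rho_es fx) -(quot_rem_fin fx) r0.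
Qed.

Lemma quot_norm_dominates (r : X -> R) : seminorm nK r ->
  (forall x, ((r x)%:E <= rho x)%E) ->
  exists D, 0 <= D /\ forall x, r x <= D * quot_norm x.
Proof.
move=> r_sn r_le; pose M := \sum_(i < m) r (v i).
have M0 : 0 <= M by apply: sumr_ge0 => i _; exact: seminorm_ge0.
exists (1 + M); split=> [|x]; first exact: addr_ge0.
have hrem : r (quot_rem x) <= fine (rho (quot_rem x)).
  by rewrite -lee_fin -X_finE //; exact: X_fin_quot_rem.
have hcomb : r (comb (quot_coord x)) <= M * \sum_(i < m) nK (quot_coord x i).
  apply: le_trans (seminorm_sum r_sn _) _; rewrite mulr_sumr; apply: ler_sum => i _.
  rewrite seminormZ // mulrC ler_wpM2r // /M (bigD1 i) //= lerDl.
  by apply: sumr_ge0 => k _; exact: seminorm_ge0.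
have hx : r x <= r (quot_rem x) + r (comb (quot_coord x)).
  by have := seminormD r_sn (quot_rem x) (comb (quot_coord x)); rewrite subrK.
have := fine_ge0 (ext_seminorm_ge0 rho_es (quot_rem x)).
have : 0 <= \sum_(i < m) nK (quot_coord x i) by exact: sumr_ge0.
rewrite /quot_norm; nra.
Qed.

End QuotientNorm.

Lemma finite_dim_quotient_seminorm : finite_dim_quotient rho ->
  exists q : X -> R, [/\ seminorm nK q, forall x, ((q x)%:E <= rho x)%E,
    forall x, q x = 0 -> rho x = 0%E &
    forall r : X -> R, seminorm nK r -> (forall x, ((r x)%:E <= rho x)%E) ->
      exists D, 0 <= D /\ forall x, r x <= D * q x].
Proof.
move=> /finite_dim_quotient_basis[m [v [v_free v_span]]].
exists (quot_norm v_span); split.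
- exact: quot_norm_seminorm.
- exact: quot_norm_le.
- exact: quot_norm_eq0.
- by move=> r; exact: quot_norm_dominates.
Qed.

End FiniteCodimension.

(** * The metric of an increasing sequence of seminorms *)

Lemma min_le_add (F : realDomainType) (a s t u : F) :
  0 <= a -> 0 <= s -> 0 <= t -> u <= s + t ->
  Num.min a u <= Num.min a s + Num.min a t.
Proof.
move=> a0 s0 t0 ust; rewrite ge_min.
by case: (leP a s) => _; case: (leP a t) => _; apply/orP; [left|left|left|right]; lra.
Qed.

Section SeminormSequenceMetric.
Variable Q : nat -> X -> R.
Hypothesis Q_sn : forall n, seminorm nK (Q n).
Hypothesis Q_mono : forall n N x, (n <= N)%N -> Q n x <= Q N x.
Hypothesis Q_sep : forall x, x != 0 -> exists n, 0 < Q n x.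

Definition seq_dist x y :=
  sup (range (fun n => Num.min (n.+1%:R^-1) (Q n (x - y)))).

Lemma seq_dist_ge x y n : Num.min (n.+1%:R^-1) (Q n (x - y)) <= seq_dist x y.
Proof.
apply: ub_le_sup; last by exists n.
by exists 1 => _ [k _ <-]; rewrite ge_min invf_le1 // ler1n.
Qed.

Lemma seq_dist_le x y b :
  (forall n, Num.min (n.+1%:R^-1) (Q n (x - y)) <= b) -> seq_dist x y <= b.
Proof.
move=> hb; apply: ge_sup => [|_ [n _ <-] //].
by exists (Num.min 1^-1 (Q 0%N (x - y))), 0%N.
Qed.

Lemma seq_dist_metric : is_metric seq_dist.
Proof.
have inv_gt0 n : 0 < (n.+1%:R : R)^-1 by rewrite invr_gt0.
split=> [x y|].
  by apply: le_trans (seq_dist_ge x y 0%N); rewrite le_min ltW ?seminorm_ge0.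
split=> [x y|]; first split=> [dxy0|->].
- apply/eqP/negPn/negP; rewrite -subr_eq0 => /Q_sep[n Qn0].
  by have := seq_dist_ge x y n; rewrite dxy0 leNgt lt_min inv_gt0 Qn0.
- apply/eqP; rewrite eq_le; apply/andP; split.
    by apply: seq_dist_le => n; rewrite subrr seminorm0 // ge_min lexx orbT.
  by apply: le_trans (seq_dist_ge y y 0%N); rewrite subrr seminorm0 // le_min lexx ltW.
split=> [x y|x y z].
  by rewrite /seq_dist; under eq_fun do rewrite seminormB //.
apply: seq_dist_le => n; apply: le_trans (lerD (seq_dist_ge x y n) (seq_dist_ge y z n)).
apply: min_le_add; rewrite ?seminorm_ge0 ?(ltW (inv_gt0 n)) //.
by have := seminormD (Q_sn n) (x - y) (y - z); rewrite addrA subrK.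
Qed.

Lemma seq_dist_topology :
  metric_topology seq_dist = induced_topology (fun n x => (Q n x)%:E).
Proof.
have inv_gt0 n : 0 < (n.+1%:R : R)^-1 by rewrite invr_gt0.
have inv_le n N : (n <= N)%N -> (N.+1%:R : R)^-1 <= n.+1%:R^-1.
  by move=> nN; rewrite lef_pV2 ?posrE // ler_nat.
apply/seteqP; split => U hU x0 Ux0.
- have [r [r0 hr]] := hU x0 Ux0; have r20 : 0 < r / 2 by rewrite divr_gt0.
  have [N] := ltr_add_invr r20; rewrite add0r => hN.
  exists [set N]; split => //; exists (r / 2); split => // y /(_ N erefl).
  rewrite lte_fin => hy; apply: hr; apply: le_lt_trans (_ : r / 2 < r); last lra.
  apply: seq_dist_le => n; rewrite ge_min; apply/orP; case: (leqP n N) => nN.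
    by right; rewrite seminormB //; apply: le_trans (Q_mono _ nN) (ltW hy).
  by left; apply: le_trans (ltW hN); exact/inv_le/ltnW.
- have [J [fJ [e [e0 hJ]]]] := hU x0 Ux0.
  have [N hN] := finite_set_ubound 0%N id fJ.
  exists (Num.min e N.+1%:R^-1); split; first by rewrite lt_min e0 inv_gt0.
  move=> y /= hy; apply: hJ => n Jn /=; rewrite lte_fin.
  have := le_lt_trans (seq_dist_ge x0 y n) hy; rewrite seminormB // !lt_min.
  case: (leP n.+1%:R^-1 (Q n (y - x0))) => [_ /andP[_]|_ /andP[] //].
  by rewrite ltNge inv_le //; exact: hN.
Qed.

End SeminormSequenceMetric.

(** * Sequences independent modulo the finite part *)

Section IndependentSequence.
Variable rho : X -> \bar R.
Hypothesis rho_es : ext_seminorm nK rho.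
Variable y : nat -> X.
Hypothesis y_indep : forall n (c : 'I_n -> K),
  ~ X_fin rho (y n - \sum_(i < n) c i *: y i).

Lemma seq_comb_fin_eq0 N (a : nat -> K) : X_fin rho (\sum_(k < N) a k *: y k) ->
  forall k, (k < N)%N -> a k = 0.
Proof.
elim: N a => [//|N IH] a; rewrite big_ord_recr /= => fa k.
have aN : a N = 0.
  apply: contrapT => /eqP aN.
  apply: (y_indep (n := N) (c := fun i => - (a N)^-1 * a i)).
  suff -> : y N - \sum_(i < N) (- (a N)^-1 * a i) *: y i =
      (a N)^-1 *: (\sum_(i < N) a i *: y i + a N *: y N) by exact: X_finZ.
  rewrite scalerDr scalerA mulVf // scale1r addrC scaler_sumr -sumrN.
  by congr (_ + _); apply: eq_bigr => i _; rewrite scalerA mulNr scaleNr opprK.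
rewrite ltnS leq_eqVlt => /predU1P[->//|kN].
by apply: IH kN; move: fa; rewrite aN scale0r addr0.
Qed.

Definition seq_rep x N (a : nat -> K) := X_fin rho (x - \sum_(k < N) a k *: y k).

Lemma seq_rep_pad x N a M : (N <= M)%N -> seq_rep x N a -> seq_rep x M (pad N a).
Proof.
move=> NM; rewrite /seq_rep.
suff -> : \sum_(k < M) pad N a k *: y k = \sum_(k < N) a k *: y k by [].
rewrite -(big_ord_pad (fun k => a k *: y k) NM).
by apply: eq_bigr => k _; rewrite /pad; case: ifP => //; rewrite scale0r.
Qed.

Lemma seq_rep_sum_uniq x N a N' b : seq_rep x N a -> seq_rep x N' b ->
  \sum_(k < N) a k = \sum_(k < N') b k.
Proof.
move=> /(seq_rep_pad (leq_addr N' N)) xa /(seq_rep_pad (leq_addl N N')) xb.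
rewrite -(big_ord_pad _ (leq_addr N' N)) -(big_ord_pad _ (leq_addl N N')).
apply: eq_bigr => k _; apply/eqP; rewrite -subr_eq0; apply/eqP.
apply: (seq_comb_fin_eq0 (a := fun k => pad N a k - pad N' b k) _ (ltn_ord k)).
suff -> : \sum_(k < N + N') (pad N a k - pad N' b k) *: y k =
    (x - \sum_(k < N + N') pad N' b k *: y k) -
    (x - \sum_(k < N + N') pad N a k *: y k).
  exact: X_finB.
by rewrite opprB addrC subrKA -sumrB; apply: eq_bigr => i _; rewrite scalerBl.
Qed.

Definition seq_span x := exists na : nat * (nat -> K), seq_rep x na.1 na.2.

Definition seq_coef_sum x :=
  if pselect (seq_span x) is left h then
    let na := projT1 (cid h) in \sum_(k < na.1) na.2 k
  else 0.

Lemma seq_coef_sumE x N a : seq_rep x N a -> seq_coef_sum x = \sum_(k < N) a k.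
Proof.
move=> xa; rewrite /seq_coef_sum; case: pselect => [h|[]]; last by exists (N, a).
by case: (cid h) => -[N' b] /= xb; exact: seq_rep_sum_uniq xb xa.
Qed.

Lemma seq_repD x x' N a N' b : seq_rep x N a -> seq_rep x' N' b ->
  seq_rep (x + x') (N + N') (fun k => pad N a k + pad N' b k).
Proof.
move=> /(seq_rep_pad (leq_addr N' N)) xa /(seq_rep_pad (leq_addl N N')) xb.
have := X_finD rho_es xa xb; rewrite addrACA -opprD -big_split /=.
by congr (X_fin _ (_ - _)); apply: eq_bigr => k _; rewrite scalerDl.
Qed.

Lemma seq_repZ s x N a : seq_rep x N a -> seq_rep (s *: x) N (fun k => s * a k).
Proof.
move=> /(X_finZ rho_es s); rewrite scalerBr scaler_sumr /seq_rep.
by congr (X_fin _ (_ - _)); apply: eq_bigr => k _; rewrite scalerA.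
Qed.

Lemma linear_on_seq_span : linear_on seq_span seq_coef_sum.
Proof.
split.
- by exists (0%N, fun=> 0); rewrite /seq_rep big_ord0 subr0; exact: X_fin0.
- move=> x x' [[N a] xa] [[N' b] xb].
  by exists (N + N', fun k => pad N a k + pad N' b k); exact: seq_repD.
- by move=> s x [[N a] xa]; exists (N, fun k => s * a k); exact: seq_repZ.
- move=> x x' [[N a] xa] [[N' b] xb]; rewrite (seq_coef_sumE (seq_repD xa xb)).
  rewrite big_split /= !big_ord_pad ?leq_addr ?leq_addl //.
  by rewrite (seq_coef_sumE xa) (seq_coef_sumE xb).
- move=> s x [[N a] xa]; rewrite (seq_coef_sumE (seq_repZ s xa)).
  by rewrite (seq_coef_sumE xa) mulr_sumr.
Qed.

Lemma independent_seq_functional : exists f : X -> K,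
  [/\ forall x x', f (x + x') = f x + f x', forall s x, f (s *: x) = s * f x,
    forall x, X_fin rho x -> f x = 0 & forall n, f (y n) = 1].
Proof.
have [f [fD fZ fE]] := linear_extension linear_on_seq_span.
have fin_rep x : X_fin rho x -> seq_rep x 0 (fun=> 0).
  by rewrite /seq_rep big_ord0 subr0.
have y_rep n : seq_rep (y n) n.+1 (fun k => (k == n)%:R).
  rewrite /seq_rep big_ord_recr /= eqxx scale1r big1 ?add0r ?subrr; first exact: X_fin0.
  by move=> i _; rewrite (ltn_eqF (ltn_ord i)) scale0r.
exists f; split=> // [x fx|n].
  rewrite fE; last by exists (0%N, fun=> 0); exact: fin_rep.
  by rewrite (seq_coef_sumE (fin_rep x fx)) big_ord0.
rewrite fE ?(seq_coef_sumE (y_rep n)); last by exists (n.+1, fun k => (k == n)%:R).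
by rewrite big_ord_recr /= eqxx big1 ?add0r // => i _; rewrite (ltn_eqF (ltn_ord i)).
Qed.

End IndependentSequence.

(** * Topologies induced by extended seminorms *)

Section InducedTopology.
Variables (I : Type) (p : I -> X -> \bar R).
Hypothesis p_es : forall i, ext_seminorm nK (p i).

Definition induced_nbhd (x0 : X) (A : set X) :=
  exists J : set I, finite_set J /\ exists eps : R, 0 < eps /\
    [set x | forall i, J i -> (p i (x - x0) < eps%:E)%E] `<=` A.

Lemma induced_nbhdS x0 A B : A `<=` B -> induced_nbhd x0 A -> induced_nbhd x0 B.
Proof.
move=> AB [J [fJ [e [e0 hJ]]]]; exists J; split => //.
by exists e; split => //; exact: subset_trans AB.
Qed.

Lemma induced_nbhdI x0 A B :
  induced_nbhd x0 A -> induced_nbhd x0 B -> induced_nbhd x0 (A `&` B).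
Proof.
move=> [J1 [f1 [e1 [e10 h1]]]] [J2 [f2 [e2 [e20 h2]]]].
exists (J1 `|` J2); split; first by rewrite finite_setU.
exists (Num.min e1 e2); split; first by rewrite lt_min e10 e20.
move=> x hx; split; [apply: h1|apply: h2] => i Ji.
  by apply: lt_le_trans (hx i (or_introl Ji)) _; rewrite lee_fin ge_min lexx.
by apply: lt_le_trans (hx i (or_intror Ji)) _; rewrite lee_fin ge_min lexx orbT.
Qed.

Lemma induced_nbhd_bigI x0 (N : nat) (A : nat -> set X) :
  (forall n, (n < N)%N -> induced_nbhd x0 (A n)) ->
  induced_nbhd x0 [set x | forall n, (n < N)%N -> A n x].
Proof.
elim: N => [|N IH] hA.
  by exists set0; split => //; exists 1; split.
have := induced_nbhdI (IH (fun n nN => hA n (ltnW nN))) (hA N (ltnSn N)).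
apply: induced_nbhdS => x [hx hN] n; rewrite ltnS leq_eqVlt => /predU1P[->//|].
exact: hx.
Qed.

Definition dominated (rho : X -> \bar R) :=
  exists J C, finite_set J /\ 0 < C /\ forall y eta, 0 < eta ->
    (forall i, J i -> (p i y < eta%:E)%E) -> (rho y <= (C * eta)%:E)%E.

Section Dominated.
Variable rho : X -> \bar R.
Hypothesis rho_es : ext_seminorm nK rho.
Hypothesis rho_dom : dominated rho.

Lemma dominated_ball_nbhd x0 r : 0 < r ->
  induced_nbhd x0 [set x | (rho (x - x0) < r%:E)%E].
Proof.
move=> r0; have [J [C [fJ [C0 hC]]]] := rho_dom.
have e0 : 0 < r / (2 * C) by rewrite divr_gt0 // mulr_gt0.
exists J; split => //; exists (r / (2 * C)); split => // x hx /=.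
apply: le_lt_trans (hC _ _ e0 hx) _; rewrite lte_fin.
have -> : C * (r / (2 * C)) = r / 2 by field; rewrite gt_eqF.
lra.
Qed.

Lemma dominated_ball_open x0 r :
  induced_topology p [set x | (rho (x - x0) < r%:E)%E].
Proof.
move=> x1 /= h1; have f10 := X_fin_lt h1.
have r0 : 0 < r - fine (rho (x1 - x0)) by rewrite subr_gt0 -lte_fin -X_finE.
apply: induced_nbhdS (dominated_ball_nbhd x1 r0) => x /= hx.
apply: le_lt_trans (ext_seminorm_distD rho_es x x1 x0) _.
by rewrite (X_finE rho_es f10) -lteBrDr // -EFinB.
Qed.

Lemma dominated_continuous : continuous_ext (induced_topology p) rho.
Proof.
have ball0 x0 r : 0 < r -> [set x | (rho (x - x0) < r%:E)%E] x0.
  by move=> r0; rewrite /= subrr ext_seminorm0 // lte_fin.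
move=> x0 V; have [fx0|/X_finNE rx0] := pselect (X_fin rho x0).
- rewrite (X_finE rho_es fx0) => /nbhs_EFin/nbhs_ballP[d d0 hd].
  exists [set x | (rho (x - x0) < d%:E)%E].
  split; [exact: dominated_ball_open|split; [exact: ball0|move=> x /= hx]].
  have fxx0 := X_fin_lt hx; have fx : X_fin rho x.
    by rewrite -(subrK x0 x); exact: X_finD.
  rewrite (X_finE rho_es fx); apply: hd; rewrite /ball /= distrC.
  apply: le_lt_trans (ext_seminorm_dist rho_es fx fx0) _.
  by rewrite -lte_fin -X_finE.
- rewrite rx0 => -[M [_ hM]]; exists [set x | (rho (x - x0) < 1%:E)%E].
  split; [exact: dominated_ball_open|split; [exact: ball0|move=> x /= hx]].
  apply: hM; suff /X_finNE -> : ~ X_fin rho x by rewrite ltry.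
  move=> /(X_fin_subr rho_es (X_fin_lt hx)) fx0.
  by move: rx0; rewrite (X_finE rho_es fx0).
Qed.

End Dominated.

Definition sup_seminorm (J : set I) (eps : R) (x : X) : \bar R :=
  ereal_sup ([set 0%E] `|` [set ((eps^-1)%:E * p i x)%E | i in J]).

Lemma sup_seminorm_ub J eps x i :
  J i -> ((eps^-1)%:E * p i x <= sup_seminorm J eps x)%E.
Proof. by move=> Ji; apply: ereal_sup_ubound; right; exists i. Qed.

Lemma sup_seminorm_ge0 J eps x : (0 <= sup_seminorm J eps x)%E.
Proof. by apply: ereal_sup_ubound; left. Qed.

Lemma sup_seminorm_ext_seminorm J eps : 0 < eps -> ext_seminorm nK (sup_seminorm J eps).
Proof.
move=> e0; have ie0 : (0 <= (eps^-1)%:E)%E by rewrite lee_fin invr_ge0 ltW.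
split; first exact: sup_seminorm_ge0.
split=> [a x|x y].
  rewrite /sup_seminorm -ereal_supZl //; last by apply/set0P; exists 0%E; left.
  congr ereal_sup; apply/seteqP; split => z.
    case=> [->|[i Ji <-]]; first by exists 0%E; [left|rewrite mule0].
    exists ((eps^-1)%:E * p i x)%E; first by right; exists i.
    by rewrite ext_seminormZ // muleCA.
  case=> w [->|[i Ji <-]] <-; first by left; rewrite mule0.
  by right; exists i => //; rewrite ext_seminormZ // muleCA.
apply: ge_ereal_sup => z [->|[i Ji <-]].
  by apply: adde_ge0; exact: sup_seminorm_ge0.
apply: le_trans (lee_wpmul2l ie0 (ext_seminormD (p_es i) x y)) _.
rewrite ge0_muleDr ?ext_seminorm_ge0 //.
by apply: leeD; exact: sup_seminorm_ub.
Qed.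

Lemma sup_seminorm_dominated J eps : 0 < eps -> finite_set J ->
  dominated (sup_seminorm J eps).
Proof.
move=> e0 fJ; exists J, eps^-1; split => //; split; first by rewrite invr_gt0.
move=> y eta eta0 hy; apply: ge_ereal_sup => z [->|[i Ji <-]].
  by rewrite lee_fin mulr_ge0 // ?invr_ge0 ltW.
by rewrite EFinM lee_wpmul2l ?lee_fin ?invr_ge0 ?ltW ?hy.
Qed.

Lemma sup_seminorm_lt1 J eps x : 0 < eps -> (sup_seminorm J eps x < 1%:E)%E ->
  forall i, J i -> (p i x < eps%:E)%E.
Proof.
move=> e0 hx i Ji; have := le_lt_trans (sup_seminorm_ub eps x Ji) hx.
rewrite -(@lte_pmul2l _ eps%:E) ?lte_fin // muleA -EFinM mulfV ?gt_eqF //.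
by rewrite mul1e mule1.
Qed.

Lemma member_dominated i : dominated (p i).
Proof.
exists [set i], 1; split => //; split => // y eta _ /(_ i erefl).
by rewrite mul1r => /ltW.
Qed.

Lemma induced_nbhd_absorbing A x :
  induced_nbhd 0 A -> (forall i, X_fin (p i) x) -> exists t, t != 0 /\ A (t *: x).
Proof.
move=> [J [fJ [e [e0 sub]]]] fx.
have [M hM] := finite_set_ubound 0 (fun i => fine (p i x)) fJ.
have M1 : 0 < `|M| + 1 by rewrite ltr_pwDr.
have [t nt] := nK_surj (divr_gt0 e0 M1).
exists t; split.
  by apply/eqP => t0; move: nt; rewrite t0 nK0 => /eqP; rewrite eq_sym gt_eqF ?divr_gt0.
apply: sub => i Ji; rewrite /= subr0 ext_seminormZ // (X_finE (p_es i) (fx i)) nt.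
rewrite -EFinM lte_fin mulrAC ltr_pdivrMr // ltr_pM2l //.
apply: le_lt_trans (hM i Ji) _; apply: le_lt_trans (ler_norm M) _.
by rewrite ltrDl.
Qed.

Lemma vanishing_topology_sub (rho : X -> \bar R) (J : Type) (q : J -> X -> \bar R) :
  ext_seminorm nK rho -> continuous_ext (induced_topology p) rho ->
  (forall j x, X_fin rho x -> q j x = 0%E) ->
  induced_topology q `<=` induced_topology p.
Proof.
move=> rho_es rho_cont q0 U hU x0 /hU[J' [_ [e [e0 sub]]]].
have : nbhs (rho 0) [set z | (z < 1%:E)%E].
  by rewrite ext_seminorm0 //; apply: open_ereal_lt'; rewrite lte_fin ltr01.
move=> /(rho_cont 0)[W [oW [W0 Wsub]]]; have [J0 [fJ0 [e1 [e10 Wball]]]] := oW 0 W0.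
exists J0; split => //; exists e1; split => // x hx; apply: sub => j _.
have /Wsub/X_fin_lt fxx0 : W (x - x0) by apply: Wball => i Ji; rewrite subr0; exact: hx.
by rewrite q0 // lte_fin.
Qed.

Lemma countable_base_ext_seminorms :
  countable_nbhd_base (induced_topology p) 0 ->
  exists rh : nat -> X -> \bar R, [/\ forall n, ext_seminorm nK (rh n),
    forall n, dominated (rh n) &
    forall N, is_nbhd (induced_topology p) 0 N ->
      exists n, [set x | (rh n x < 1%:E)%E] `<=` N].
Proof.
move=> [B [Bnbhd Bbase]].
have /choice[Je hJe] : forall n, exists Je : set I * R, [/\ finite_set Je.1, 0 < Je.2 &
    [set x | forall i, Je.1 i -> (p i (x - 0) < Je.2%:E)%E] `<=` B n].
  move=> n; have [U [hU [U0 UB]]] := Bnbhd n.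
  have [J [fJ [e [e0 sub]]]] := hU 0 U0.
  by exists (J, e); split => //; exact: subset_trans UB.
exists (fun n => sup_seminorm (Je n).1 (Je n).2); split=> [n|n|N /Bbase[n BN]].
- by have [_ e0 _] := hJe n; exact: sup_seminorm_ext_seminorm.
- by have [fJ e0 _] := hJe n; exact: sup_seminorm_dominated.
exists n => x /= hx; apply: BN; have [_ e0 sub] := hJe n.
by apply: sub => i Ji; rewrite subr0; exact: sup_seminorm_lt1 hx i Ji.
Qed.

Lemma partial_sum_topology_sub (q : nat -> X -> R) (rh : nat -> X -> \bar R) :
  (forall n, seminorm nK (q n)) -> (forall n, ext_seminorm nK (rh n)) ->
  (forall n, dominated (rh n)) -> (forall n x, ((q n x)%:E <= rh n x)%E) ->
  induced_topology (fun N x => (partial_sum q N x)%:E) `<=` induced_topology p.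
Proof.
move=> q_sn rh_es rh_dom q_le U hU x0 /hU[J [fJ [e [e0 sub]]]].
have [N hN] := finite_set_ubound 0%N id fJ.
have e'0 : 0 < e / N.+1%:R by rewrite divr_gt0.
have := @induced_nbhd_bigI x0 N.+1 _ (fun n _ => dominated_ball_nbhd (rh_dom n) x0 e'0).
apply: induced_nbhdS => x hx; apply: sub => n Jn; rewrite lte_fin.
apply: le_lt_trans (partial_sum_mono q_sn _ (hN n Jn)) _.
have -> : e = \sum_(k < N.+1) e / N.+1%:R.
  by rewrite sumr_const card_ord -[_ *+ N.+1]mulr_natr divfK // pnatr_eq0.
apply: ltr_sum; first by apply/hasP; exists ord0; rewrite ?mem_index_enum.
move=> k _; rewrite -lte_fin; apply: le_lt_trans (q_le k _) _.
exact: hx k (ltn_ord k).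
Qed.

End InducedTopology.

Lemma induced_topology_sub_mono (J : Type) (r : J -> X -> R) (Q : nat -> X -> R) :
  (forall n, seminorm nK (Q n)) -> (forall n N x, (n <= N)%N -> Q n x <= Q N x) ->
  (forall j, exists n D, 0 <= D /\ forall x, r j x <= D * Q n x) ->
  induced_topology (fun j x => (r j x)%:E) `<=`
  induced_topology (fun n x => (Q n x)%:E).
Proof.
move=> Q_sn Q_mono /choice[n /choice[D rQ]] U hU x0 /hU[J' [fJ' [e [e0 sub]]]].
have [N hN] := finite_set_ubound 0%N n fJ'.
have [M hM] := finite_set_ubound 0 D fJ'.
have M1 : 0 < `|M| + 1 by rewrite ltr_pwDr.
exists [set N]; split => //; exists (e / (`|M| + 1)); split; first by rewrite divr_gt0.
move=> y /(_ N erefl); rewrite lte_fin ltr_pdivlMr // => hy; apply: sub => j Jj.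
rewrite lte_fin; apply: le_lt_trans (proj2 (rQ j) (y - x0)) _.
apply: le_lt_trans hy; rewrite [leRHS]mulrC; apply: ler_pM.
- exact: (proj1 (rQ j)).
- exact: seminorm_ge0.
- by apply: le_trans (hM j Jj) _; rewrite (le_trans (ler_norm M)) ?lerDl.
- exact: Q_mono (hN j Jj).
Qed.

Lemma seminorm_unit_ball_open (J : Type) (r : J -> X -> R) :
  (forall j, seminorm nK (r j)) ->
  forall j, induced_topology (fun j x => (r j x)%:E) [set x | r j x < 1].
Proof.
move=> r_sn j; have := dominated_ball_open (x0 := 0) (r := 1)
  (seminorm_ext_seminorm (r_sn j)) (member_dominated (fun j x => (r j x)%:E) j).
rewrite (_ : [set x | _] = [set x | r j x < 1]) // funeqE => x /=.
by rewrite subr0 lte_fin.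
Qed.

Lemma seminorm_le_of_unit_ball (r : X -> R) (rho : X -> \bar R) :
  seminorm nK r -> ext_seminorm nK rho ->
  [set x | (rho x < 1%:E)%E] `<=` [set x | r x < 1] ->
  forall x, ((r x)%:E <= rho x)%E.
Proof.
move=> r_sn rho_es ball_sub x.
have [fx|/X_finNE -> //] := pselect (X_fin rho x); last exact: leey.
rewrite (X_finE rho_es fx) lee_fin; apply/unstable.ler_gtP => s hs.
have s0 : 0 < s by apply: le_lt_trans hs; exact: fine_ge0 (ext_seminorm_ge0 rho_es x).
have [b nb] : exists b, nK b = s^-1 by apply: nK_surj; rewrite invr_gt0.
have /ball_sub : (rho (b *: x) < 1%:E)%E.
  rewrite ext_seminormZ // (X_finE rho_es fx) nb -EFinM lte_fin mulrC.
  by rewrite ltr_pdivrMr ?mul1r.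
by rewrite /= seminormZ // nb mulrC ltr_pdivrMr // mul1r => /ltW.
Qed.

Lemma finite_dim_quotient_metrizable (I : Type) (p : I -> X -> \bar R) :
  (forall i, ext_seminorm nK (p i)) ->
  hausdorff_top (induced_topology p) ->
  countable_nbhd_base (induced_topology p) 0 ->
  forall tauF, finest_lc_topology nK (induced_topology p) tauF ->
  (forall rho, ext_seminorm nK rho -> continuous_ext (induced_topology p) rho ->
     finite_dim_quotient rho) ->
  metrizable_top R tauF.
Proof.
move=> p_es hsep /(countable_base_ext_seminorms p_es)[rh [rh_es rh_dom rh_base]] tauF.
move=> [[J [r [r_sn ->]]] [lc_sub lc_max]] fdq.
have /choice[q hq] := fun n => finite_dim_quotient_seminorm (rh_es n)
  (fdq _ (rh_es n) (dominated_continuous (rh_es n) (rh_dom n))).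
have q_sn n : seminorm nK (q n) by case: (hq n).
have Q_sn N : seminorm nK (partial_sum q N) by exact: partial_sum_seminorm.
have Q_mono n N x : (n <= N)%N -> partial_sum q n x <= partial_sum q N x.
  exact: partial_sum_mono.
have Q_sep x : x != 0 -> exists n, 0 < partial_sum q n x.
  move=> /eqP/(hausdorff_base_separating hsep rh_base)[n rhx]; exists n.
  apply: lt_le_trans (le_partial_sum q_sn n x); rewrite lt_neqAle seminorm_ge0 // andbT.
  apply/eqP => q0; have [_ _ /(_ x (esym q0)) rh0 _] := hq n.
  by apply: rhx; rewrite /= rh0 lte01.
have r_dom j : exists n D, 0 <= D /\ forall x, r j x <= D * partial_sum q n x.
  have [n sub] : exists n, [set x | (rh n x < 1%:E)%E] `<=` [set x | r j x < 1].
    apply: rh_base; exists [set x | r j x < 1].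
    by split; [exact/lc_sub/seminorm_unit_ball_open|split=> //=; rewrite seminorm0].
  have [_ _ _ q_dom] := hq n.
  have r_le := seminorm_le_of_unit_ball (r_sn j) (rh_es n) sub.
  have [D [D0 rD]] := q_dom _ (r_sn j) r_le.
  exists n, D; split => // x.
  by apply: le_trans (rD x) _; rewrite ler_wpM2l ?le_partial_sum.
have -> : induced_topology (fun j x => (r j x)%:E) =
    induced_topology (fun n x => (partial_sum q n x)%:E).
  apply/seteqP; split.
    exact: induced_topology_sub_mono r_dom.
  apply: lc_max; first by exists nat, (partial_sum q).
  by apply: partial_sum_topology_sub rh_es rh_dom _ => // n x; have [] := hq n.
exists (seq_dist (partial_sum q)).
by split; [exact: seq_dist_metric|exact: seq_dist_topology].
Qed.

Lemma metric_ball_outside_span (J : Type) (r : J -> X -> R) (d : X -> X -> R)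
    (rho : X -> \bar R) :
  (forall j, seminorm nK (r j)) -> is_metric d ->
  metric_topology d = induced_topology (fun j x => (r j x)%:E) ->
  ext_seminorm nK rho -> ~ finite_dim_quotient rho ->
  forall n (v : 'I_n -> X), exists z, d 0 z < n.+1%:R^-1 /\
    forall c : 'I_n -> K, ~ X_fin rho (z - \sum_(i < n) c i *: v i).
Proof.
move=> r_sn d_metric dE rho_es not_fdq n v.
have [x xout] : exists x, forall c : 'I_n -> K,
    ~ X_fin rho (x - \sum_(i < n) c i *: v i).
  apply: contrapT => /forallNP xin; apply: not_fdq; exists n, v => x.
  by have /existsNP[c /contrapT] := xin x; exists c.
have d00 : d 0 0 = 0 by case: d_metric => _ [/(_ 0 0)[_ ->]].
have := metric_ball_open (x := 0) (r := n.+1%:R^-1) d_metric.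
rewrite dE => /(_ 0); rewrite /= d00 invr_gt0 => /(_ (ltr0Sn _ _)) ball0.
have r_es j : ext_seminorm nK (fun x => (r j x)%:E) by exact: seminorm_ext_seminorm.
have [|t [t0 tx]] := induced_nbhd_absorbing (x := x) r_es ball0.
  by move=> j; exact: ltry.
by exists (t *: x); split=> //; exact: outside_span_modulo_scale.
Qed.

Lemma metrizable_finite_dim_quotient (I : Type) (p : I -> X -> \bar R) :
  (forall i, ext_seminorm nK (p i)) ->
  forall tauF, finest_lc_topology nK (induced_topology p) tauF ->
  metrizable_top R tauF ->
  forall rho, ext_seminorm nK rho -> continuous_ext (induced_topology p) rho ->
    finite_dim_quotient rho.
Proof.
move=> p_es tauF [[J [r [r_sn tauFE]]] [lc_sub lc_max]] [d [d_metric dE]].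
move=> rho rho_es rho_cont; apply: contrapT => not_fdq.
have small := metric_ball_outside_span r_sn d_metric (etrans dE tauFE) rho_es not_fdq.
have [y yP] := prefix_choice 0 small.
have [f [fD fZ f0 f1]] := independent_seq_functional rho_es (fun n => proj2 (yP n)).
pose q x := nK (f x).
have q_sn : seminorm nK q by split=> [a x|x x']; rewrite /q ?fZ ?nKM ?fD.
have q_open : tauF [set x | q x < 1].
  apply: (lc_max _ _ _ _ (seminorm_unit_ball_open (j := tt) (fun _ : unit => q_sn))).
    by exists unit, (fun _ => q).
  apply: (vanishing_topology_sub rho_es rho_cont) => _ x fx.
  by rewrite /q f0 // nK0.
have [e [e0 ball_q]] : exists e, 0 < e /\ [set z | d 0 z < e] `<=` [set x | q x < 1].
  by move: q_open; rewrite -dE; apply; rewrite /= /q f0 ?nK0 ?ltr01 //; exact: X_fin0.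
have [N] := ltr_add_invr e0; rewrite add0r => Ne.
have /ball_q : d 0 (y N) < e by apply: lt_trans Ne; exact: proj1 (yP N).
by rewrite /= /q f1 nK1 ltxx.
Qed.

Lemma metrizable_finest_lcE (I : Type) (p : I -> X -> \bar R) :
  (forall i, ext_seminorm nK (p i)) ->
  hausdorff_top (induced_topology p) ->
  countable_nbhd_base (induced_topology p) 0 ->
  forall tauF, finest_lc_topology nK (induced_topology p) tauF ->
  metrizable_top R tauF <->
  (forall rho, ext_seminorm nK rho -> continuous_ext (induced_topology p) rho ->
     finite_dim_quotient rho).
Proof.
move=> p_es hsep base tauF finest; split.
  exact: metrizable_finite_dim_quotient.
exact: finite_dim_quotient_metrizable.
Qed.

End AbsoluteValue.

Theorem theorem5p10 (R : realType) :
  (forall (X : lmodType R) (I : Type) (p : I -> X -> \bar R),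
     (forall i, ext_seminorm (fun a : R => `|a|) (p i)) ->
     hausdorff_top (induced_topology p) ->
     countable_nbhd_base (induced_topology p) 0 ->
     forall tauF : set (set X),
       finest_lc_topology (fun a : R => `|a|) (induced_topology p) tauF ->
       (metrizable_top R tauF <->
        (forall rho : X -> \bar R,
           ext_seminorm (fun a : R => `|a|) rho ->
           continuous_ext (induced_topology p) rho ->
           finite_dim_quotient rho))) /\
  (forall (X : lmodType R[i]) (I : Type) (p : I -> X -> \bar R),
     (forall i, ext_seminorm (@cmod R) (p i)) ->
     hausdorff_top (induced_topology p) ->
     countable_nbhd_base (induced_topology p) 0 ->
     forall tauF : set (set X),
       finest_lc_topology (@cmod R) (induced_topology p) tauF ->
       (metrizable_top R tauF <->
        (forall rho : X -> \bar R,
           ext_seminorm (@cmod R) rho ->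
           continuous_ext (induced_topology p) rho ->
           finite_dim_quotient rho))).
Proof.
split=> X I p; apply: metrizable_finest_lcE.
- exact: normr0.
- by move=> a; exact: normr_ge0.
- by move=> a; exact: normr0_eq0.
- exact: normrM.
- exact: ler_normD.
- exact: normr1.
- exact: normrN1.
- by move=> r r0; exists r; exact: gtr0_norm.
- exact: Normc.normc0.
- by move=> [a b]; exact: sqrtr_ge0.
- exact: Normc.eq0_normc.
- exact: Normc.normcM.
- exact: le_normcD.
- exact: Normc.normc1.
- by rewrite /cmod normcN; exact: Normc.normc1.
- move=> r r0; exists r%:C%C; rewrite /cmod /Normc.normc /=.
  by rewrite expr0n /= addr0 sqrtr_sqr gtr0_norm.
Qed.
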